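(* For every $0<\alpha\le 1$ there exist $n$, $m$, a preference profile $\sigma$ on $n$ voters and $m$ alternatives, and two distributions $\mathcal{D}_1,\mathcal{D}_2$ both supported on $[0,1]$ such that no alternative $j\in A$ satisfies both $\mathbb{E}_{\mathcal{D}_1}[\mathrm{sw}(j,u)]\ge\alpha\max_{k\in A}\mathbb{E}_{\mathcal{D}_1}[\mathrm{sw}(k,u)]$ and $\mathbb{E}_{\mathcal{D}_2}[\mathrm{sw}(j,u)]\ge\alpha\max_{k\in A}\mathbb{E}_{\mathcal{D}_2}[\mathrm{sw}(k,u)]$.
   Context: There are $n$ voters and $m$ alternatives $A=\{1,\dots,m\}$. A preference profile $\sigma$ consists of a ranking of $A$ for each voter. Given a distribution $\mathcal{D}$ and profile $\sigma$, a random utility profile $u$ consistent with $\sigma$ is generated as follows: independently for each voter $i$, draw $m$ i.i.d. samples from $\mathcal{D}$ and assign them, from highest to lowest, to the alternatives in the order of voter $i$'s ranking. The social welfare of $j$ is $\mathrm{sw}(j,u)=\sum_i u_{ij}$; $\mathbb{E}_{\mathcal{D}}$ denotes expectation over $u$ generated with distribution $\mathcal{D}$. *)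

From HB Require Import structures.
From mathcomp Require Import all_boot all_order all_algebra all_fingroup.
From mathcomp Require Import all_classical all_reals all_analysis.

Set Implicit Arguments.
Unset Strict Implicit.
Unset Printing Implicit Defensive.

Import Order.TTheory GRing.Theory Num.Theory.
Local Open Scope ring_scope.
Local Open Scope ereal_scope.
Local Open Scope classical_set_scope.

(* Iterated integral of F over k i.i.d. samples drawn from the distribution P:
   iter_int P k F = \int[P]_x1 ... \int[P]_xk F [:: x1; ...; xk]
   (the expectation of F under the k-fold product distribution P^k). *)
Fixpoint iter_int (R : realType) (P : probability R R) (k : nat)
    (F : seq R -> \bar R) : \bar R :=
  match k with
  | 0 => F [::]
  | k'.+1 => \int[P]_x iter_int P k' (fun s => F (x :: s))
  end.

(* A preference profile on n voters and m alternatives: for each voter i,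
   a ranking of 'I_m given as the permutation  j |-> position of j  in
   voter i's ranking (position 0 = most preferred). *)
Definition profile (n m : nat) := 'I_n -> {perm 'I_m}.

(* The sample sequence s has n*m entries; voter i uses the block
   s_{i*m}, ..., s_{i*m+m-1}.  Sorted from highest to lowest, the value at
   position r goes to the alternative ranked r-th by voter i. *)
Definition utility (R : realType) (n m : nat) (sigma : profile n m)
    (s : seq R) (i : 'I_n) (j : 'I_m) : R :=
  nth 0%R (sort (fun x y : R => (y <= x)%R) (take m (drop (i * m) s)))
      (sigma i j).

Definition sw (R : realType) (n m : nat) (sigma : profile n m)
    (j : 'I_m) (s : seq R) : R :=
  (\sum_(i < n) utility sigma s i j)%R.

Definition exp_sw (R : realType) (D : probability R R) (n m : nat)
    (sigma : profile n m) (j : 'I_m) : \bar R :=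
  iter_int D (n * m) (fun s => (sw sigma j s)%:E).

Definition max_exp_sw (R : realType) (D : probability R R) (n m : nat)
    (sigma : profile n m) : \bar R :=
  \big[maxe/-oo]_(k < m) exp_sw D sigma k.

Definition supported01 (R : realType) (D : probability R R) : Prop :=
  D [set` `[0%R, 1%R]] = 1.

(* Take k voters and k + 1 alternatives: a compromise [ord0] that every voter
   ranks second, and for each voter i a favourite [lift ord0 i] that i ranks
   first and every other voter ranks third or lower.  Under the two-point law
   on {0, 1} with P(1) = p, the utility of the alternative a voter ranks r-th
   is 1 exactly when more than r of the voter's k + 1 samples equal 1, so its
   expectation is the binomial tail P(Bin(k + 1, p) > r).  For p of order
   alpha / k^2 every favourite (welfare about (k + 1) p) beats the compromise
   (about k ((k + 1) p)^2 / 2) by a factor larger than 1 / alpha; for p of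
   order alpha / k the compromise (about k alpha^2 / 128) beats every
   favourite (about alpha / 8) by such a factor as soon as k alpha^2 is large. *)

From HB Require Import structures.
From mathcomp Require Import all_boot all_order all_algebra all_fingroup.
From mathcomp Require Import all_classical all_reals all_analysis.
From mathcomp Require Import ring lra measurable_realfun.

Set Implicit Arguments.
Unset Strict Implicit.
Unset Printing Implicit Defensive.
Import Order.TTheory GRing.Theory Num.Theory.
Local Open Scope classical_set_scope.
Local Open Scope ring_scope.

Section bernoulli01.
Context {R : realType} (p : {i01 R}).
Import HBNNSimple.

Definition bernoulli01 : set R -> \bar R :=
  measure_add (mscale (p%:num)%:nng \d_(1 : R)) (mscale (1 - p%:num)%:nng \d_(0 : R)).

HB.instance Definition _ := Measure.on bernoulli01.

Lemma bernoulli01E (A : set R) :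
  bernoulli01 A = (p%:num * (\1_A 1 : R) + (1 - p%:num) * \1_A 0)%:E.
Proof. by rewrite /bernoulli01 measure_addE /= /mscale /= !diracE -!EFinM -EFinD. Qed.

Let bernoulli01_setT : bernoulli01 setT = 1%E.
Proof. by rewrite bernoulli01E !indicT !mulr1 addrC subrK. Qed.

HB.instance Definition _ :=
  @Measure_isProbability.Build _ _ R bernoulli01 bernoulli01_setT.

Lemma supported01_bernoulli01 : supported01 bernoulli01.
Proof.
rewrite /supported01 /= bernoulli01E !indicE !mem_set.
- by rewrite !mulr1 addrC subrK.
- by apply: mem_set; rewrite /= in_itv /= lexx ler01.
- by apply: mem_set; rewrite /= in_itv /= lexx ler01.
Qed.

Lemma integral_bernoulli01_nnsfun (h : {nnsfun R >-> R}) :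
  (\int[bernoulli01]_x (h x)%:E = (p%:num * h 1 + (1 - p%:num) * h 0)%:E)%E.
Proof.
have mh : measurable_fun [set: R] (EFin \o h) by exact/measurable_EFinP.
have h0 x : setT x -> (0 <= (h x)%:E)%E by rewrite lee_fin.
rewrite ge0_integral_measure_add// !ge0_integral_mscale// !integral_dirac//.
by rewrite !diracE !in_setT !mul1e -!EFinM -EFinD.
Qed.

(* No measurability assumption: the integral of a nonnegative function is a
   supremum over the simple functions below it, and these are only seen
   through their values at 0 and 1. *)
Lemma ge0_integral_bernoulli01 (f : R -> R) : (forall x, 0 <= f x) ->
  (\int[bernoulli01]_x (f x)%:E = (p%:num * f 1 + (1 - p%:num) * f 0)%:E)%E.
Proof.
move=> f0; have [p0 p1] : 0 <= p%:num /\ 1 - p%:num >= 0 by rewrite subr_ge0.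
rewrite ge0_integralTE; last by move=> x; rewrite lee_fin.
apply/eqP; rewrite eq_le; apply/andP; split.
  apply: ge_ereal_sup => _ [h hf <-].
  rewrite -integralT_nnsfun integral_bernoulli01_nnsfun lee_fin.
  by rewrite lerD// ler_wpM2l// -lee_fin.
apply: ereal_sup_ubound.
pose step := add_nnsfun
  (scale_nnsfun (indic_nnsfun R (measurable_set1 (1 : R))) (f0 1))
  (scale_nnsfun (indic_nnsfun R (measurable_set1 (0 : R))) (f0 0)).
have stepE x : step x = f 1 * \1_[set 1] x + f 0 * \1_[set 0] x by [].
exists step; last first.
  by rewrite -integralT_nnsfun integral_bernoulli01_nnsfun !stepE !indicE
    !in_set1 !eqxx oner_eq0 (eq_sym 0) oner_eq0 !mulr1 !mulr0 addr0 add0r.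
move=> x; rewrite stepE !indicE !in_set1 lee_fin.
have [->|x1] := eqVneq x 1; first by rewrite oner_eq0 mulr1 mulr0 addr0.
by have [->|x0] := eqVneq x 0; rewrite ?mulr1 !mulr0 ?add0r ?addr0.
Qed.

Lemma integral_bernoulli01 (g : R -> R) :
  (\int[bernoulli01]_x (g x)%:E = (p%:num * g 1 + (1 - p%:num) * g 0)%:E)%E.
Proof.
have max0_ge0 (a : R) : 0 <= Num.max a 0 by rewrite le_max lexx orbT.
have maxB (a : R) : Num.max a 0 - Num.max (- a) 0 = a.
  by case: (lerP 0 a) => a0; [rewrite (max_idPr _) ?subr0 // oppr_le0 |
    rewrite (max_idPl _) ?sub0r ?opprK // oppr_ge0 ltW].
rewrite integralE.
under eq_integral => x _ do rewrite funeposE -EFin_max.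
under [X in (_ - X)%E]eq_integral => x _ do rewrite funenegE -EFin_max.
rewrite !ge0_integral_bernoulli01 // -EFinB.
by rewrite -[in RHS](maxB (g 1)) -[in RHS](maxB (g 0)); congr (_%:E); ring.
Qed.

End bernoulli01.

Section expect01.
Context {R : realType} (p : R).

Fixpoint expect01 (k : nat) (G : seq R -> R) : R :=
  match k with
  | 0 => G [::]
  | k'.+1 => p * expect01 k' (fun s => G (1 :: s))
             + (1 - p) * expect01 k' (fun s => G (0 :: s))
  end.

Definition all01 (s : seq R) := all (fun x => (x == 0) || (x == 1)) s.

Lemma eq_expect01 k (G1 G2 : seq R -> R) :
  (forall s, all01 s -> G1 s = G2 s) -> expect01 k G1 = expect01 k G2.
Proof.
elim: k G1 G2 => [|k IH] G1 G2 G12 /=; first exact: G12.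
by congr (_ * _ + _ * _); apply: IH => s s01; apply: G12;
  apply/andP; split; rewrite ?eqxx ?orbT.
Qed.

Lemma expect01_cst k c : expect01 k (fun _ => c) = c.
Proof. by elim: k => //= k ->; ring. Qed.

Lemma expect01_sum k n (G : 'I_n -> seq R -> R) :
  expect01 k (fun s => \sum_(i < n) G i s) = \sum_(i < n) expect01 k (G i).
Proof.
elim: k G => [|k IH] G //=.
by rewrite !IH !mulr_sumr -big_split.
Qed.

Lemma expect01_drop a k (G : seq R -> R) :
  expect01 (a + k) (fun s => G (drop a s)) = expect01 k G.
Proof.
elim: a G => [|a IH] G; last by rewrite addSn /= !IH; ring.
by rewrite add0n; apply: eq_expect01 => s _; rewrite drop0.
Qed.

Lemma expect01_take k b (G : seq R -> R) :
  expect01 (k + b) (fun s => G (take k s)) = expect01 k G.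
Proof.
elim: k G => [|k IH] G; last first.
  by rewrite addSn /= (IH (fun s => G (1 :: s))) (IH (fun s => G (0 :: s))).
by rewrite /= -[RHS](expect01_cst b); apply: eq_expect01 => s _; rewrite take0.
Qed.

Lemma expect01_block n m i (G : seq R -> R) : (i < n)%N ->
  expect01 (n * m) (fun s => G (take m (drop (i * m) s))) = expect01 m G.
Proof.
move=> lt_i_n; have -> : (n * m = i * m + (m + (n - i.+1) * m))%N.
  by rewrite addnA -mulSnr -mulnDl subnKC.
by rewrite (expect01_drop _ _ (fun t => G (take m t))) expect01_take.
Qed.

Hypothesis p01 : 0 <= p <= 1.

Lemma ler_expect01 k (G1 G2 : seq R -> R) :
  (forall s, all01 s -> G1 s <= G2 s) -> expect01 k G1 <= expect01 k G2.
Proof.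
have [p0 p1] : 0 <= p /\ 0 <= 1 - p by rewrite subr_ge0; apply/andP.
elim: k G1 G2 => [|k IH] G1 G2 G12 /=; first exact: G12.
by rewrite lerD // ler_wpM2l // IH // => s s01; apply: G12;
  apply/andP; split; rewrite ?eqxx ?orbT.
Qed.

End expect01.

Lemma iter_int_bernoulli01 {R : realType} (p : {i01 R}) k (G : seq R -> R) :
  iter_int (bernoulli01 p) k (fun s => (G s)%:E) = (expect01 p%:num k G)%:E.
Proof.
elim: k G => [|k IH] G //=.
under eq_integral => x _ do rewrite (IH (fun s => G (x :: s))).
by rewrite integral_bernoulli01.
Qed.

Section sort01.
Context {R : realType}.

Lemma sort_ge01 (s : seq R) : all01 s ->
  sort (fun x y => y <= x) s = nseq (count_mem 1 s) 1 ++ nseq (size s - count_mem 1 s) 0.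
Proof.
move=> s01; have ge_trans : transitive (fun x y : R => y <= x).
  by move=> x y z /[swap]; exact: le_trans.
have sorted_10 c d : sorted (fun x y : R => y <= x) (nseq c 1 ++ nseq d 0).
  elim: c => [|c IH] /=.
    by elim: d => //= d IH; rewrite path_min_sorted // all_nseq lexx orbT.
  by rewrite path_min_sorted // all_cat !all_nseq lexx ler01 !orbT.
apply: (sorted_eq ge_trans) => //.
- by move=> x y /andP[xy yx]; apply/le_anti; rewrite xy yx.
- by apply: sort_sorted => x y; exact: le_total.
rewrite perm_sort; elim: s s01 => [|x s IH] //= /andP[/orP[]/eqP-> /IH].
  rewrite eq_sym oner_eq0 add0n subSn ?count_size //= => perm_s.
  by rewrite perm_sym -[0 :: nseq _ _]cat1s perm_catCA /= perm_cons perm_sym.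
by rewrite eqxx add1n subSS /= perm_cons.
Qed.

Lemma nth_sort_ge01 (s : seq R) r : all01 s ->
  nth 0 (sort (fun x y => y <= x) s) r = (r < count_mem 1 s)%:R.
Proof.
move=> s01; rewrite sort_ge01 // nth_cat size_nseq.
by case: ltnP => r_c; rewrite nth_nseq ?r_c //; case: ifP.
Qed.

End sort01.

Section binomial_tail.
Context {R : realType} (p : R).
Hypothesis p01 : 0 <= p <= 1.

Definition binomial_tail m j := expect01 p m (fun t => (j <= count_mem 1 t)%:R).

Lemma binomial_tail0 m : binomial_tail m 0 = 1.
Proof. exact: expect01_cst. Qed.

Lemma binomial_tailSS m j :
  binomial_tail m.+1 j.+1 = p * binomial_tail m j + (1 - p) * binomial_tail m j.+1.
Proof.
by congr (_ * _ + _ * _); apply: eq_expect01 => s _; rewrite /= ?eqxx // eq_sym oner_eq0.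
Qed.

Lemma binomial_tail_ge0 m j : 0 <= binomial_tail m j.
Proof.
by rewrite -(expect01_cst p m 0); apply: ler_expect01.
Qed.

Lemma binomial_tail_nonincr m j j' :
  (j <= j')%N -> binomial_tail m j' <= binomial_tail m j.
Proof.
move=> le_jj'; apply: ler_expect01 => // s _; rewrite ler_nat.
by case: (leqP j') => // /(leq_trans le_jj') ->.
Qed.

Lemma binomial_tail1_le m : binomial_tail m 1 <= m%:R * p.
Proof.
case/andP: p01 => p0 p1.
elim: m => [|m IH]; first by rewrite mul0r.
rewrite binomial_tailSS binomial_tail0 -natr1.
have := binomial_tail_ge0 m 1; nra.
Qed.

Lemma binomial_tail2_le m : binomial_tail m 2 <= (m%:R * p) ^+ 2 / 2.
Proof.
case/andP: p01 => p0 p1.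
elim: m => [|m IH]; first by rewrite mul0r expr0n /= mul0r.
rewrite binomial_tailSS -natr1.
have := binomial_tail_ge0 m 2; have := binomial_tail1_le m; have : 0 <= m%:R :> R by [].
nra.
Qed.

Lemma binomial_tail3_le m : binomial_tail m 3 <= (m%:R * p) ^+ 3 / 6.
Proof.
case/andP: p01 => p0 p1.
elim: m => [|m IH]; first by rewrite mul0r expr0n /= mul0r.
rewrite binomial_tailSS -natr1.
have m0 : 0 <= m%:R :> R by [].
have h2 : p * binomial_tail m 2 <= p * ((m%:R * p) ^+ 2 / 2).
  by rewrite ler_wpM2l // binomial_tail2_le.
have h3 : (1 - p) * binomial_tail m 3 <= binomial_tail m 3.
  by have := binomial_tail_ge0 m 3; nra.
have p3 : 0 <= p ^+ 3 * (3 * m%:R + 1) by rewrite mulr_ge0 // ?exprn_ge0 //; lra.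
nra.
Qed.

Lemma binomial_tail1_ge m : m%:R * p * (1 - m%:R * p) <= binomial_tail m 1.
Proof.
case/andP: p01 => p0 p1.
elim: m => [|m IH]; first by rewrite !mul0r.
rewrite binomial_tailSS binomial_tail0 -natr1.
have : 0 <= m%:R :> R by [].
nra.
Qed.

Lemma binomial_tail2_ge m :
  m%:R * (m%:R - 1) / 2 * p ^+ 2 * (1 - m%:R * p) <= binomial_tail m 2.
Proof.
case/andP: p01 => p0 p1.
elim: m => [|m IH]; first by rewrite !mul0r.
rewrite binomial_tailSS -natr1.
have m0 : 0 <= m%:R :> R by [].
have c0 : 0 <= m%:R * (m%:R - 1) / 2 :> R.
  by case: m {IH m0} => [|m]; rewrite ?mul0r // divr_ge0 // mulr_ge0 // -natr1 addrK.
have h1 : p * (m%:R * p * (1 - m%:R * p)) <= p * binomial_tail m 1.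
  by rewrite ler_wpM2l // binomial_tail1_ge.
have h2 : (1 - p) * (m%:R * (m%:R - 1) / 2 * p ^+ 2 * (1 - m%:R * p)) <=
          (1 - p) * binomial_tail m 2 by rewrite ler_wpM2l // subr_ge0.
have h3 : 0 <= p ^+ 3 * (m%:R + m%:R * (m%:R - 1) / 2 * m%:R * p).
  by rewrite mulr_ge0 ?exprn_ge0 // addr_ge0 // mulr_ge0 // mulr_ge0.
nra.
Qed.

End binomial_tail.

Section binomial_tail_gaps.
Context {R : realType}.

Lemma binomial_tail2_lt_tail1 k (a p : R) : 0 < a <= 1 -> p = a / (2 * k.+1%:R ^+ 2) ->
  k%:R * binomial_tail p k.+1 2 < a * binomial_tail p k.+1 1.
Proof.
move=> /andP[a0 a1] pE; set M : R := k.+1%:R.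
have M1 : 1 <= M by rewrite /M ler1n.
have kE : k%:R = M - 1 by rewrite /M -natr1 addrK.
have x_gt0 : 0 < a / (2 * M) by rewrite divr_gt0 //; lra.
have x_le : a / (2 * M) <= 1 / 2 by rewrite ler_pdivrMr; nra.
have MpE : M * p = a / (2 * M) by rewrite pE; field; lra.
have p01 : 0 <= p <= 1.
  by rewrite pE divr_ge0 ?ler_pdivrMr ?mulr_ge0 ?exprn_ge0 //=; nra.
have := binomial_tail2_le p01 k.+1; have := binomial_tail1_ge p01 k.+1.
rewrite -/M MpE kE; set x := a / (2 * M) => lo1 up2.
have MxE : M * (x ^+ 2 / 2) = a * x / 4 by rewrite /x; field; lra.
have : (M - 1) * binomial_tail p k.+1 2 <= M * (x ^+ 2 / 2) by nra.
have : a * x / 2 <= a * binomial_tail p k.+1 1 by nra.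
have : 0 < a * x by rewrite mulr_gt0.
lra.
Qed.

Lemma binomial_tail13_lt_tail2 k (a p : R) :
  0 < a <= 1 -> 192 < k.+1%:R * a ^+ 2 -> p = a / (8 * k.+1%:R) ->
  binomial_tail p k.+1 1 + k%:R * binomial_tail p k.+1 3 <
    a * (k%:R * binomial_tail p k.+1 2).
Proof.
move=> /andP[a0 a1] Ma pE; set M : R := k.+1%:R in Ma pE *.
have M2 : 2 <= M by nra.
have kE : k%:R = M - 1 by rewrite /M -natr1 addrK.
have MpE : M * p = a / 8 by rewrite pE; field; lra.
have p01 : 0 <= p <= 1 by rewrite pE divr_ge0 ?ler_pdivrMr /=; nra.
have Q3_ge0 := binomial_tail_ge0 p01 k.+1 3.
have := binomial_tail1_le p01 k.+1; have := binomial_tail3_le p01 k.+1.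
have := binomial_tail2_ge p01 k.+1.
rewrite -/M MpE kE => lo2 up3 up1.
have Q3_le : (M - 1) * binomial_tail p k.+1 3 <= M * ((a / 8) ^+ 3 / 6) by nra.
have loE : M * (M * (M - 1) / 2 * p ^+ 2 * (1 - a / 8) * (M - 1)) =
    (M - 1) ^+ 2 * (a / 8) ^+ 2 * (1 - a / 8) / 2 by rewrite -MpE; ring.
have lo_ge : M * (a / 8) ^+ 2 / 16 <= M * (M - 1) / 2 * p ^+ 2 * (1 - a / 8) * (M - 1).
  rewrite -(ler_pM2l (_ : 0 < M)) ?loE; last lra.
  have : M ^+ 2 <= 4 * (M - 1) ^+ 2 by nra.
  have : 0 <= (a / 8) ^+ 2 by rewrite exprn_ge0 // divr_ge0 //; lra.
  nra.
have Q2_ge : a * (M * (a / 8) ^+ 2 / 16) <= a * ((M - 1) * binomial_tail p k.+1 2).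
  apply: ler_wpM2l; first lra.
  by apply: le_trans lo_ge _; rewrite mulrC; apply: ler_wpM2l => //; lra.
have : 0 < a * (M * a ^+ 2 - 192) by rewrite mulr_gt0 // subr_gt0.
lra.
Qed.

End binomial_tail_gaps.

Lemma exp_sw_bernoulli01 {R : realType} (p : {i01 R}) n m (sigma : profile n m) j :
  exp_sw (bernoulli01 p) sigma j =
    (\sum_(i < n) binomial_tail p%:num m (sigma i j).+1)%:E.
Proof.
rewrite /exp_sw iter_int_bernoulli01 /sw expect01_sum; congr _%:E.
apply: eq_bigr => i _; rewrite /utility.
rewrite (expect01_block _ _ (fun t => nth 0 (sort _ t) (sigma i j)) (ltn_ord i)).
by apply: eq_expect01 => t t01; rewrite nth_sort_ge01.
Qed.

Lemma not_approx_max_exp_sw {R : realType} (D : probability R R) n m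
    (sigma : profile n m) (a : R) j j' :
  0 <= a -> (exp_sw D sigma j < a%:E * exp_sw D sigma j')%E ->
  ~ (a%:E * max_exp_sw D sigma <= exp_sw D sigma j)%E.
Proof.
move=> a0 lt_j_j' ge_j.
have : (a%:E * exp_sw D sigma j' <= a%:E * max_exp_sw D sigma)%E.
  by apply: lee_wpmul2l; [rewrite lee_fin | exact: le_bigmax].
by move/le_trans/(_ ge_j)/(lt_le_trans lt_j_j'); rewrite ltxx.
Qed.

Section compromise_profile.
Variable k : nat.
Hypothesis k_gt0 : (0 < k)%N.

Definition second : 'I_k.+1 := inord 1.

(* Voter [i] ranks [lift ord0 i] first and [ord0] second. *)
Definition compromise_profile : profile k k.+1 :=
  fun i => (tperm second (lift ord0 i) * tperm ord0 second)%g.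

Lemma second_val : second = 1%N :> nat.
Proof. by rewrite inordK. Qed.

Lemma compromise_profile_ord0 i : compromise_profile i ord0 = second.
Proof.
have second_neq0 : second != ord0 by apply/eqP => /(congr1 val); rewrite /= second_val.
by rewrite permM [tperm _ _ ord0]tpermD ?tpermL // eq_sym neq_lift.
Qed.

Lemma compromise_profile_favourite i : compromise_profile i (lift ord0 i) = ord0.
Proof. by rewrite permM tpermR tpermR. Qed.

Lemma compromise_profile_other i i' :
  i != i' -> (2 <= compromise_profile i (lift ord0 i'))%N.
Proof.
move=> neq_ii'; set r := compromise_profile i _.
have r_neq0 : r != ord0.
  by rewrite -(compromise_profile_favourite i) (inj_eq perm_inj) (inj_eq lift_inj) eq_sym.
have r_neq1 : r != second.
  by rewrite -(compromise_profile_ord0 i) (inj_eq perm_inj) eq_sym neq_lift.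
move: r_neq0 r_neq1; rewrite -!(inj_eq val_inj) /= second_val.
by case: (nat_of_ord r) => [|[|]].
Qed.

Context {R : realType}.

Lemma exp_sw_compromise (p : {i01 R}) :
  exp_sw (bernoulli01 p) compromise_profile ord0 =
    (k%:R * binomial_tail p%:num k.+1 2)%:E.
Proof.
rewrite exp_sw_bernoulli01; congr _%:E.
under eq_bigr => i _ do rewrite compromise_profile_ord0 second_val.
by rewrite sumr_const card_ord mulr_natl.
Qed.

Section exp_sw_bounds.
Variable p : {i01 R}.
Let p01 : 0 <= p%:num <= 1. Proof. by apply/andP. Qed.

Lemma exp_sw_favourite_ge i :
  ((binomial_tail p%:num k.+1 1)%:E <=
    exp_sw (bernoulli01 p) compromise_profile (lift ord0 i))%E.
Proof.
rewrite exp_sw_bernoulli01 lee_fin (bigD1 i) //= compromise_profile_favourite lerDl.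
by apply: sumr_ge0 => i' _; exact: binomial_tail_ge0.
Qed.

Lemma exp_sw_favourite_le i :
  (exp_sw (bernoulli01 p) compromise_profile (lift ord0 i) <=
    (binomial_tail p%:num k.+1 1 + k%:R * binomial_tail p%:num k.+1 3)%:E)%E.
Proof.
rewrite exp_sw_bernoulli01 lee_fin (bigD1 i) //= compromise_profile_favourite lerD2l.
have -> : k%:R * binomial_tail p%:num k.+1 3 = \sum_(i' < k) binomial_tail p%:num k.+1 3.
  by rewrite sumr_const card_ord mulr_natl.
rewrite [leRHS](bigD1 i) //= -[leLHS]add0r lerD ?binomial_tail_ge0 //.
apply: ler_sum => i' neq_i'i; apply: binomial_tail_nonincr => //.
by rewrite ltnS compromise_profile_other // eq_sym.
Qed.

End exp_sw_bounds.

Lemma exp_sw_compromise_lt (a : R) (p : {i01 R}) i :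
  0 < a <= 1 -> p%:num = a / (2 * k.+1%:R ^+ 2) ->
  (exp_sw (bernoulli01 p) compromise_profile ord0 <
    a%:E * exp_sw (bernoulli01 p) compromise_profile (lift ord0 i))%E.
Proof.
move=> a01 pE; rewrite exp_sw_compromise.
apply: (lt_le_trans _ (lee_wpmul2l _ (exp_sw_favourite_ge p i))).
  by rewrite -EFinM lte_fin binomial_tail2_lt_tail1.
by rewrite lee_fin; case/andP: a01 => /ltW.
Qed.

Lemma exp_sw_favourite_lt (a : R) (p : {i01 R}) i :
  0 < a <= 1 -> 192 < k.+1%:R * a ^+ 2 -> p%:num = a / (8 * k.+1%:R) ->
  (exp_sw (bernoulli01 p) compromise_profile (lift ord0 i) <
    a%:E * exp_sw (bernoulli01 p) compromise_profile ord0)%E.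
Proof.
move=> a01 Ma pE; rewrite exp_sw_compromise -EFinM.
apply: le_lt_trans (exp_sw_favourite_le p i) _.
by rewrite lte_fin binomial_tail13_lt_tail2.
Qed.

End compromise_profile.

Lemma exists_i01_div {R : realType} (a c : R) :
  0 < a <= 1 -> 1 <= c -> exists p : {i01 R}, p%:num = a / c.
Proof.
move=> /andP[a0 a1] c1.
have q0 : 0 <= a / c by rewrite divr_ge0 //; lra.
have q1 : a / c <= 1 by rewrite ler_pdivrMr; lra.
by exists (Itv01 q0 q1).
Qed.

Local Open Scope ereal_scope.

Theorem theorem4 (R : realType) (alpha : R) :
  (0 < alpha <= 1)%R ->
  exists (n m : nat) (sigma : profile n m) (D1 D2 : probability R R),
    (0 < n)%N /\ (0 < m)%N /\ supported01 D1 /\ supported01 D2 /\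
    ~ (exists j : 'I_m,
          exp_sw D1 sigma j >= alpha%:E * max_exp_sw D1 sigma /\
          exp_sw D2 sigma j >= alpha%:E * max_exp_sw D2 sigma).
Proof.
move=> a01; have /andP[a_gt0 _] := a01.
have [k k_gt0 k_large] : exists2 k, (0 < k)%N & (192 < k.+1%:R * alpha ^+ 2)%R.
  exists (Num.truncn (192 / alpha ^+ 2)).+1 => //.
  rewrite -ltr_pdivrMr ?exprn_gt0 //; apply: (lt_le_trans (truncnS_gt _)).
  by rewrite ler_nat.
have M_ge1 : (1 <= k.+1%:R :> R)%R by rewrite ler1n.
have [p1 p1E] : exists p : {i01 R}, p%:num = (alpha / (2 * k.+1%:R ^+ 2))%R.
  by apply: exists_i01_div => //; nra.
have [p2 p2E] : exists p : {i01 R}, p%:num = (alpha / (8 * k.+1%:R))%R.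
  by apply: exists_i01_div => //; nra.
exists k, k.+1, (@compromise_profile k), (bernoulli01 p1), (bernoulli01 p2).
do !split => //; try exact: supported01_bernoulli01.
move=> [j [ge_max1 ge_max2]]; case: (unliftP ord0 j) => [i ->|->] in ge_max1 ge_max2.
- exact: not_approx_max_exp_sw (ltW a_gt0)
    (exp_sw_favourite_lt k_gt0 i a01 k_large p2E) ge_max2.
- exact: not_approx_max_exp_sw (ltW a_gt0)
    (exp_sw_compromise_lt k_gt0 (Ordinal k_gt0) a01 p1E) ge_max1.
Qed.
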